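(* Let $\vec G$ be an oriented graph whose underlying graph $G$ has maximum average degree $\mathrm{mad}(G)<8/3$. Then the push graph $[\vec G]$ admits a homomorphism to the oriented graph $\vec P_3^+$; that is, some presentation of $[\vec G]$ admits a homomorphism to $\vec P_3^+$.
   Context: The maximum average degree of an undirected graph $G$ is $\mathrm{mad}(G)=\max\{2|E(H)|/|V(H)| : H \text{ a subgraph of } G \text{ with } V(H)\neq\emptyset\}$. $\vec P_3^+$ is the oriented graph on vertices $\{a,b,c,d\}$ with arcs $ac,\ cb,\ ba$ (a directed $3$-cycle) and $da,\ db,\ dc$. An oriented graph is a directed graph with no loops and no pair of opposite arcs. A homomorphism of oriented graphs $\vec G\to\vec H$ is a vertex map sending every arc $uv$ to an arc $\varphi(u)\varphi(v)$. To push a vertex means to reverse all arcs incident with it; the push graph $[\vec G]$ is the set of oriented graphs obtainable from $\vec G$ by pushing some set of vertices (its presentations). *)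

From mathcomp Require Import all_boot.
Set Implicit Arguments. Unset Strict Implicit. Unset Printing Implicit Defensive.

Definition oriented (T : finType) (arc : rel T) : Prop :=
  irreflexive arc /\ forall x y, arc x y -> ~~ arc y x.

Definition und_edges (T : finType) (arc : rel T) : {set {set T}} :=
  [set [set x; y] | x in T, y in T & arc x y].

(* mad(G) < p/q : every subgraph H = (S, F) with S nonempty, F a set of
   edges of G with both ends in S, satisfies 2|F|/|S| < p/q. *)
Definition mad_lt (T : finType) (arc : rel T) (p q : nat) : Prop :=
  forall (S : {set T}) (F : {set {set T}}),
    S != set0 -> F \subset und_edges arc ->
    (forall e, e \in F -> e \subset S) ->
    q * (2 * #|F|) < p * #|S|.

(* Pushing the vertex set X: reverse every arc with exactly one end in X
   (an arc with both ends in X is reversed twice). *)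
Definition push (T : finType) (arc : rel T) (X : {set T}) : rel T :=
  fun x y => if (x \in X) (+) (y \in X) then arc y x else arc x y.

(* P3+ on 'I_4 with a = 0, b = 1, c = 2, d = 3:
   arcs ac, cb, ba, da, db, dc. *)
Definition P3plus_arc : rel 'I_4 :=
  fun u v => (val u, val v) \in [:: (0,2); (2,1); (1,0); (3,0); (3,1); (3,2)].

Definition is_hom (T U : finType) (arcT : rel T) (arcU : rel U) (f : T -> U) :=
  forall x y, arcT x y -> arcU (f x) (f y).

(* A push-presentation of G mapped to P3+ is the same as a homomorphism from G
   to the antitwin graph of P3+, whose vertices are pairs (colour, pushed?).
   In that 8-vertex graph every vertex has three in- and three out-neighbours,
   so a vertex always has 3 colours compatible with one coloured neighbour; and
   along a path q - x - z with x of degree 2, only one colour of z leaves no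
   colour for x.  Hence a minimal counterexample has no vertex of degree at most
   1, no two adjacent vertices of degree 2 and no vertex of degree 3 with two
   neighbours of degree 2.  Giving each vertex charge 3 d(v) - 8 and letting
   every vertex of degree at least 3 send 1 to each neighbour of degree 2 makes
   all charges nonnegative, so its average degree is at least 8/3. *)

From mathcomp Require Import all_boot zify.
Set Implicit Arguments. Unset Strict Implicit. Unset Printing Implicit Defensive.

Definition antitwin (U : Type) (H : rel U) : rel (U * bool) :=
  fun p q => if p.2 == q.2 then H p.1 q.1 else H q.1 p.1.

(* [a1] and [a2] record an arc from the neighbour coloured [p] to the vertex
   coloured [z], resp. back. *)
Definition compat (U : Type) (H : rel U) (a1 a2 : bool) (p z : U) :=
  (a1 ==> H p z) && (a2 ==> H z p).

Definition joinable (U : finType) (H : rel U) (b1 b2 c1 c2 : bool) (p z : U) :=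
  [exists x, compat H b1 b2 p x && compat H c1 c2 z x].

Lemma push_hom_of_antitwin_hom (T U : finType) (arc : rel T) (H : rel U)
    (g : T -> U * bool) :
  is_hom arc (antitwin H) g -> is_hom (push arc [set v | (g v).2]) H (fun v => (g v).1).
Proof.
move=> g_hom x y; rewrite /push !inE; move: (g_hom x y) (g_hom y x); rewrite /antitwin.
by case: (g x) => a []; case: (g y) => b [].
Qed.

Lemma card_uniq_complete (T : finType) (s : seq T) (A : pred T) :
  uniq s -> (forall x, x \in s) -> #|A| = count A s.
Proof.
move=> s_uniq s_full; rewrite -size_filter -(card_uniqP (filter_uniq _ s_uniq)).
by apply: eq_card => x; rewrite mem_filter s_full andbT.
Qed.

Lemma exists_avoiding (T : finType) (A B C : {pred T}) :
  2 < #|A| -> #|B| <= 1 -> #|C| <= 1 -> exists2 z, z \in A & ~~ [|| z \in B | z \in C].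
Proof.
move=> A_gt2 B_le1 C_le1.
case: (pickP [predD A & [predU B & C]]) => [z /andP[zBC zA] | noz]; first by exists z.
have /subset_leq_card: A \subset [predU B & C].
  by apply/subsetP => z zA; move: (noz z); rewrite /= zA andbT => /negbFE.
have BC_le2 : #|[predU B & C]| <= 2.
  by rewrite (leq_trans (leq_addr #|[predI B & C]| _)) // cardUI (leq_add B_le1 C_le1).
by move=> /leq_trans/(_ BC_le2); rewrite leqNgt A_gt2.
Qed.

Lemma card2_other (T : finType) (A : {set T}) a :
  a \in A -> #|A| = 2 -> exists2 b, b != a & A = [set a; b].
Proof.
move=> aA; rewrite (cardsD1 a) aA => -[] /eqP/cards1P[b Ab]; exists b.
  by have := set11 b; rewrite -Ab !inE => /andP[].
by rewrite -(setD1K aA) Ab.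
Qed.

Lemma card3_other (T : finType) (A : {set T}) a b :
  a \in A -> b \in A -> a != b -> #|A| = 3 -> exists w, A = [set a; b; w].
Proof.
move=> aA bA ab; have bAa : b \in A :\ a by rewrite !inE eq_sym ab.
rewrite (cardsD1 a) aA (cardsD1 b) bAa => -[] /eqP/cards1P[w Aw].
by exists w; rewrite -(setD1K aA) -(setD1K bAa) Aw setUA.
Qed.

Lemma card_le1_sub1 (T : finType) (A : {set T}) (x0 : T) :
  #|A| <= 1 -> exists w, A \subset [set w].
Proof.
case: (set_0Vmem A) => [-> | [a aA]] A_le1; first by exists x0; exact: sub0set.
by exists a; apply/subsetP => b bA; rewrite inE (card_le1_eqP A_le1 b a).
Qed.

Lemma card_set_in_sum (T : finType) (S : {set T}) (P : pred T) :
  #|[set u in S | P u]| = \sum_(u in S) P u.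
Proof.
rewrite -sum1_card [LHS]big_mkcond [RHS]big_mkcond; apply: eq_bigr => u _.
by rewrite inE; case: (u \in S); case: (P u).
Qed.

(* An explicit enumeration: [enum], [ord_enum] and [#|_|] do not reduce under
   [vm_compute], so the finite checks below count along this list instead. *)
Definition colours : seq ('I_4 * bool) :=
  [seq (i, b) | i <- [:: Ordinal (isT : 0 < 4); Ordinal (isT : 1 < 4);
                         Ordinal (isT : 2 < 4); Ordinal (isT : 3 < 4)],
                b <- [:: true; false]].

Lemma colours_uniq : uniq colours. Proof. by vm_compute. Qed.

Lemma mem_colours p : p \in colours.
Proof. by case: p => [[[|[|[|[|i]]]] Hi] []]. Qed.

Lemma all_colours (P : pred ('I_4 * bool)) : all P colours -> forall p, P p.
Proof. by move/allP=> P_all p; apply: P_all; exact: mem_colours. Qed.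

Lemma existsb_colours (P : pred ('I_4 * bool)) : [exists x, P x] = has P colours.
Proof.
by apply/existsP/hasP => [[x Px] | [x _ Px]]; exists x => //; exact: mem_colours.
Qed.

Lemma card_colours (A : pred ('I_4 * bool)) : #|A| = count A colours.
Proof. exact: card_uniq_complete colours_uniq mem_colours. Qed.

Notation antitwinP3 := (antitwin P3plus_arc).

Lemma antitwinP3_compat_card p a1 a2 :
  ~~ (a1 && a2) -> 2 < #|[pred z | compat antitwinP3 a1 a2 p z]|.
Proof.
move=> a12; rewrite card_colours; move: p.
by case: a1 a2 a12 => [] [] // _; apply: all_colours; vm_compute.
Qed.

Lemma antitwinP3_not_joinable_card q b1 b2 c1 c2 :
  ~~ (b1 && b2) -> ~~ (c1 && c2) ->
  #|[pred z | ~~ joinable antitwinP3 b1 b2 c1 c2 q z]| <= 1.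
Proof.
move=> b12 c12.
rewrite card_colours; under eq_count => z do rewrite /= /joinable existsb_colours.
move: q; case: b1 b2 c1 c2 b12 c12 => [] [] [] [] // _ _;
  by apply: all_colours; vm_compute.
Qed.

Section Colouring.

Variables (T : finType) (arc : rel T).
Hypothesis arc_irr : irreflexive arc.
Hypothesis arc_asym : forall x y, arc x y -> ~~ arc y x.

Definition adj x y := arc x y || arc y x.
Definition nbhd (S : {set T}) v := [set u in S | adj v u].
Definition deg (S : {set T}) v := #|nbhd S v|.

Definition hom_on (U : Type) (H : rel U) (S : {set T}) (g : T -> U) :=
  {in S &, forall x y, arc x y -> H (g x) (g y)}.

Lemma adjC x y : adj x y = adj y x.
Proof. by rewrite /adj orbC. Qed.

Lemma arc_not_both x y : ~~ (arc x y && arc y x).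
Proof. by apply/andP => -[/arc_asym/negP]. Qed.

Lemma adj_neq x y : adj x y -> x != y.
Proof. by apply: contraTneq => ->; rewrite /adj arc_irr. Qed.

Lemma nbhdD1 (S : {set T}) v x : nbhd (S :\ x) v = nbhd S v :\ x.
Proof. by apply/setP => u; rewrite !inE andbA. Qed.

Lemma hom_onS (U : Type) (H : rel U) (S1 S2 : {set T}) (g : T -> U) :
  S1 \subset S2 -> hom_on H S2 g -> hom_on H S1 g.
Proof. by move=> /subsetP sub12 g_hom x y /sub12 xS /sub12 yS; apply: g_hom. Qed.

Lemma hom_on_extend (U : Type) (H : rel U) (S : {set T}) v (g : T -> U) z :
  v \in S -> hom_on H (S :\ v) g ->
  {in nbhd S v, forall u, compat H (arc u v) (arc v u) (g u) z} ->
  hom_on H S [eta g with v |-> z].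
Proof.
move=> vS g_hom z_ok x y xS yS /=.
have adj_ok u :
    u \in S -> u != v -> arc u v || arc v u -> compat H (arc u v) (arc v u) (g u) z.
  by move=> uS uv uv_adj; apply: z_ok; rewrite inE uS adjC.
have [-> | xv] := eqVneq x v; have [-> | yv] := eqVneq y v; rewrite ?arc_irr //.
- by move=> vy; move: (adj_ok y yS yv); rewrite vy orbT => /(_ isT) /andP[_].
- by move=> xv'; move: (adj_ok x xS xv); rewrite xv' => /(_ isT) /andP[].
- by apply: g_hom; rewrite !inE ?xv ?yv.
Qed.

Lemma reduce_low_degree (S : {set T}) v (g : T -> 'I_4 * bool) :
  v \in S -> deg S v <= 1 ->
  hom_on antitwinP3 (S :\ v) g -> exists g', hom_on antitwinP3 S g'.
Proof.
move=> vS v_le1 g_hom; have [w Nv] := card_le1_sub1 v v_le1.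
have /card_gt0P[z z_ok] : 0 < #|[pred z | compat antitwinP3 (arc w v) (arc v w) (g w) z]|.
  exact: leq_trans (antitwinP3_compat_card (g w) (arc_not_both w v)).
exists [eta g with v |-> z]; apply: hom_on_extend => // u /(subsetP Nv).
by rewrite inE => /eqP->.
Qed.

Lemma reduce_adjacent_deg2 (S : {set T}) x y (g : T -> 'I_4 * bool) :
  x \in S -> y \in S -> adj x y -> deg S x = 2 -> deg S y = 2 ->
  hom_on antitwinP3 (S :\ x) g -> exists g', hom_on antitwinP3 S g'.
Proof.
move=> xS yS xy x_deg2 y_deg2 g_hom.
have [u uy Nx] : exists2 u, u != y & nbhd S x = [set y; u].
  by apply: card2_other x_deg2; rewrite inE yS.
have [w _ Ny] : exists2 w, w != x & nbhd S y = [set x; w].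
  by apply: card2_other y_deg2; rewrite inE xS adjC.
have [z1 z1_w] : exists2 z1, compat antitwinP3 (arc w y) (arc y w) (g w) z1 &
    joinable antitwinP3 (arc u x) (arc x u) (arc y x) (arc x y) (g u) z1.
  have nj := antitwinP3_not_joinable_card (g u) (arc_not_both u x) (arc_not_both y x).
  have := antitwinP3_compat_card (g w) (arc_not_both w y).
  move=> /exists_avoiding/(_ nj nj)[z1 z1_w].
  by rewrite orbb negbK; exists z1.
case/existsP=> zx /andP[zx_u zx_y].
pose g1 := [eta g with y |-> z1].
have g1_hom : hom_on antitwinP3 (S :\ x) g1.
  apply: hom_on_extend; first by rewrite !inE eq_sym adj_neq.
    by apply: hom_onS g_hom; exact: subD1set.
  by move=> t; rewrite nbhdD1 Ny !inE => /andP[tx]; rewrite (negbTE tx) => /eqP->.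
exists [eta g1 with x |-> zx]; apply: hom_on_extend => // t.
by rewrite Nx !inE => /orP[] /eqP->; rewrite /= ?eqxx ?(negbTE uy).
Qed.

Lemma reduce_deg3 (S : {set T}) v x y (g : T -> 'I_4 * bool) :
  v \in S -> deg S v = 3 -> x \in nbhd S v -> y \in nbhd S v -> x != y ->
  deg S x = 2 -> deg S y = 2 -> ~~ adj x y ->
  hom_on antitwinP3 (S :\ v) g -> exists g', hom_on antitwinP3 S g'.
Proof.
move=> vS v_deg3 xNv yNv xy x_deg2 y_deg2 xy_nadj g_hom.
have [w Nv] := card3_other xNv yNv xy v_deg3.
have [xS vx] := setIdP xNv; have [yS vy] := setIdP yNv.
have v_x := adj_neq vx; have v_y := adj_neq vy.
have [x' x'v Nx] : exists2 x', x' != v & nbhd S x = [set v; x'].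
  by apply: card2_other x_deg2; rewrite inE vS adjC vx.
have [y' y'v Ny] : exists2 y', y' != v & nbhd S y = [set v; y'].
  by apply: card2_other y_deg2; rewrite inE vS adjC vy.
have y'x : y' != x.
  apply: contraNneq xy_nadj => y'_eq.
  by have := set22 v y'; rewrite -Ny y'_eq inE adjC => /andP[].
have [z z_w] : exists2 z, compat antitwinP3 (arc w v) (arc v w) (g w) z &
    joinable antitwinP3 (arc x' x) (arc x x') (arc v x) (arc x v) (g x') z &&
    joinable antitwinP3 (arc y' y) (arc y y') (arc v y) (arc y v) (g y') z.
  have [z z_w] := exists_avoiding (antitwinP3_compat_card (g w) (arc_not_both w v))
    (antitwinP3_not_joinable_card (g x') (arc_not_both x' x) (arc_not_both v x))
    (antitwinP3_not_joinable_card (g y') (arc_not_both y' y) (arc_not_both v y)).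
  by rewrite negb_or !negbK; exists z.
case/andP=> /existsP[zx /andP[zx_x' zx_v]] /existsP[zy /andP[zy_y' zy_v]].
pose g1 := [eta g with v |-> z]; pose g2 := [eta g1 with x |-> zx].
have g1_hom : hom_on antitwinP3 (S :\ y :\ x) g1.
  apply: hom_on_extend.
  - by rewrite !inE vS v_x v_y.
  - by apply: hom_onS g_hom; apply/subsetP => t; rewrite !inE => /and4P[-> _ _ ->].
  - move=> t; rewrite !nbhdD1 Nv !inE => /and3P[tx ty].
    by rewrite (negbTE tx) (negbTE ty) => /eqP->.
have g2_hom : hom_on antitwinP3 (S :\ y) g2.
  apply: hom_on_extend => //; first by rewrite !inE xy xS.
  move=> t; rewrite nbhdD1 Nx !inE => /andP[_ /orP[] /eqP->];
    by rewrite /= ?eqxx ?(negbTE x'v).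
exists [eta g2 with y |-> zy]; apply: hom_on_extend => //.
move=> t; rewrite Ny !inE => /orP[] /eqP->;
  by rewrite /= ?(negbTE v_x) ?eqxx ?(negbTE y'x) ?(negbTE y'v).
Qed.

Definition arcs_in (S : {set T}) := [set e in setX S S | arc e.1 e.2].

Lemma card_arcs_in (S : {set T}) :
  #|arcs_in S| = \sum_(v in S) \sum_(u in S) arc v u.
Proof.
rewrite pair_big -sum1_card [LHS]big_mkcond [RHS]big_mkcond.
apply: eq_bigr => -[a b] _.
by rewrite !inE /=; case: (a \in S); case: (b \in S); case: (arc a b).
Qed.

Lemma deg_sum (S : {set T}) v : deg S v = \sum_(u in S) (arc v u + arc u v).
Proof.
rewrite /deg card_set_in_sum; apply: eq_bigr => u _; rewrite /adj.
by case vu: (arc v u); case uv: (arc u v) => //; move: (arc_asym vu); rewrite uv.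
Qed.

Lemma sum_deg (S : {set T}) : \sum_(v in S) deg S v = 2 * #|arcs_in S|.
Proof.
under eq_bigr => v _ do rewrite deg_sum big_split.
by rewrite big_split /= [X in _ + X]exchange_big addnn mul2n card_arcs_in.
Qed.

Lemma card_edges_in (S : {set T}) :
  #|[set [set e.1; e.2] | e in arcs_in S]| = #|arcs_in S|.
Proof.
apply: card_in_imset => -[a b] [c d]; rewrite !inE /= => /andP[_ ab] /andP[_ cd] Eab.
have /set2P[ac | ad] : a \in [set c; d] by rewrite -Eab set21.
  have /set2P[bc | bd] : b \in [set c; d] by rewrite -Eab set22.
    by move: ab; rewrite ac bc arc_irr.
  by rewrite ac bd.
have /set2P[bc | bd] : b \in [set c; d] by rewrite -Eab set22.
  by move: (arc_asym cd); rewrite -ad -bc ab.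
by move: ab; rewrite ad bd arc_irr.
Qed.

Lemma mad_lt_sum_deg p q (S : {set T}) : mad_lt arc p q -> S != set0 ->
  q * \sum_(v in S) deg S v < p * #|S|.
Proof.
move=> mad S0; rewrite sum_deg -card_edges_in; apply: mad S0 _ _.
  apply/subsetP => e /imsetP[[a b]]; rewrite !inE /= => /andP[_ ab] ->.
  by apply/imset2P; exists a b; rewrite ?inE.
move=> e /imsetP[[a b]]; rewrite !inE /= => /andP[/andP[aS bS] _] ->.
by apply/subsetP => u; rewrite !inE => /orP[] /eqP->.
Qed.

Definition nbhd2 (S : {set T}) v := [set u in nbhd S v | deg S u == 2].

Lemma sum_card_nbhd2 (S : {set T}) :
  {in S &, forall x y, adj x y -> deg S x = 2 -> 2 < deg S y} ->
  \sum_(v in S) (2 < deg S v) * #|nbhd2 S v| = \sum_(v in S) 2 * (deg S v == 2).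
Proof.
move=> deg2_nbhd.
have nbhd2E v : #|nbhd2 S v| = \sum_(u in S) (adj v u && (deg S u == 2)).
  by rewrite -card_set_in_sum; apply: eq_card => u; rewrite !inE andbA.
under eq_bigr => v _ do rewrite nbhd2E big_distrr /=.
rewrite exchange_big; apply: eq_bigr => u uS /=.
have [u_deg2 | _] := eqVneq (deg S u) 2; last first.
  by rewrite big1 // => v _; rewrite andbF muln0.
transitivity (\sum_(v in S) adj u v).
  apply: eq_bigr => v vS.
  rewrite andbT adjC; case: (boolP (adj u v)) => [uv | _]; last by rewrite muln0.
  by rewrite (deg2_nbhd u v).
by rewrite -card_set_in_sum -/(nbhd S u) -/(deg S u) u_deg2.
Qed.

Lemma discharging (S : {set T}) :
  {in S, forall v, 1 < deg S v} ->
  {in S &, forall x y, adj x y -> deg S x = 2 -> 2 < deg S y} ->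
  {in S, forall v, deg S v = 3 -> #|nbhd2 S v| <= 1} ->
  8 * #|S| <= 3 * \sum_(v in S) deg S v.
Proof.
move=> deg_gt1 deg2_nbhd deg3_nbhd2.
have charge : \sum_(v in S) 8 + \sum_(v in S) (2 < deg S v) * #|nbhd2 S v|
    <= \sum_(v in S) 3 * deg S v + \sum_(v in S) 2 * (deg S v == 2).
  rewrite -!big_split; apply: leq_sum => v vS; have := deg_gt1 v vS.
  have : #|nbhd2 S v| <= deg S v.
    by apply/subset_leq_card/subsetP => u; rewrite inE => /andP[].
  have := deg3_nbhd2 v vS; case: (deg S v) => [|[|[|[|d]]]] //=; lia.
by move: charge; rewrite sum_card_nbhd2 // leq_add2r sum_nat_const mulnC -big_distrr.
Qed.

Lemma hom_on_antitwinP3_step (S : {set T}) : mad_lt arc 8 3 ->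
  (forall v, v \in S -> exists g, hom_on antitwinP3 (S :\ v) g) ->
  exists g, hom_on antitwinP3 S g.
Proof.
move=> mad IH; have [-> | S0] := eqVneq S set0.
  by exists (fun=> (ord0, true)) => x y; rewrite inE.
have [/exists_inP[v vS v_le1] | /exists_inPn no1] := boolP [exists v in S, deg S v <= 1].
  by have [g] := IH v vS; apply: reduce_low_degree.
have deg_gt1 : {in S, forall v, 1 < deg S v} by move=> v /no1; rewrite ltnNge.
have [/exists_inP[x xS /exists_inP[y yS /and3P[xy /eqP x_deg2 /eqP y_deg2]]] | no22] :=
  boolP [exists x in S, exists y in S, [&& adj x y, deg S x == 2 & deg S y == 2]].
  by have [g] := IH x xS; apply: reduce_adjacent_deg2 xy x_deg2 y_deg2.
have deg2_nbhd : {in S &, forall x y, adj x y -> deg S x = 2 -> 2 < deg S y}.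
  move=> x y xS yS xy x_deg2; have y_gt1 := deg_gt1 y yS.
  have y_ne2 : deg S y != 2.
    apply: contraNneq no22 => y_deg2; apply/exists_inP; exists x => //.
    by apply/exists_inP; exists y; rewrite // xy x_deg2 y_deg2.
  by rewrite ltn_neqAle eq_sym y_ne2.
have [/exists_inP[v vS /andP[/eqP v_deg3 /card_gt1P[x [y [xN yN xy]]]]] | no3] :=
  boolP [exists v in S, (deg S v == 3) && (1 < #|nbhd2 S v|)].
  case/setIdP: xN => xNv /eqP x_deg2; case/setIdP: yN => yNv /eqP y_deg2.
  have [[xS _] [yS _]] := (setIdP xNv, setIdP yNv).
  have xy_nadj : ~~ adj x y.
    apply: contraNN no22 => xy_adj; apply/exists_inP; exists x => //.
    by apply/exists_inP; exists y; rewrite // xy_adj x_deg2 y_deg2.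
  by have [g] := IH v vS; apply: reduce_deg3 vS v_deg3 xNv yNv xy x_deg2 y_deg2 xy_nadj.
have deg3_nbhd2 : {in S, forall v, deg S v = 3 -> #|nbhd2 S v| <= 1}.
  move=> v vS v_deg3; move/exists_inPn: no3 => /(_ v vS).
  by rewrite v_deg3 eqxx ltnNge negbK.
have := discharging deg_gt1 deg2_nbhd deg3_nbhd2.
by rewrite leqNgt (mad_lt_sum_deg mad S0).
Qed.

Lemma hom_on_antitwinP3 (S : {set T}) : mad_lt arc 8 3 -> exists g, hom_on antitwinP3 S g.
Proof.
move=> mad; elim: {S}_.+1 {-2}S (ltnSn #|S|) => // n IH S S_lt.
apply: hom_on_antitwinP3_step => // v vS; apply: IH.
by move: S_lt; rewrite (cardsD1 v S) vS.
Qed.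

End Colouring.

Theorem mainTheorem12 (T : finType) (arc : rel T) :
  oriented arc -> mad_lt arc 8 3 ->
  exists (X : {set T}) (f : T -> 'I_4), is_hom (push arc X) P3plus_arc f.
Proof.
move=> [arc_irr arc_asym] mad.
have [g g_hom] := hom_on_antitwinP3 arc_irr arc_asym [set: T] mad.
exists [set v | (g v).2], (fun v => (g v).1).
by apply: push_hom_of_antitwin_hom => x y; apply: g_hom.
Qed.
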